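(* Let $(T,\eta,\mu)$ be a monad on $\mathsf{Set}$ such that $\eta$ is a cartesian natural transformation or $\mu$ is a cartesian natural transformation. Then the commutative square $$\begin{array}{ccc} X & \xrightarrow{\ \eta_{TX}\circ\eta_X\ } & TTX \\ \| & & \downarrow{\scriptstyle \mu_X} \\ X & \xrightarrow{\ \eta_X\ } & TX \end{array}$$ (whose left vertical map is the identity of $X$) is a pullback in $\mathsf{Set}$ for every set $X$ if and only if it is a pullback for $X=1=\{\ast\}$.
   Context: A natural transformation $\alpha:F\Rightarrow G$ between functors $\mathsf{Set}\to\mathsf{Set}$ is called cartesian if for every function $f:X\to Y$ the naturality square with sides $Ff$, $\alpha_X$, $\alpha_Y$, $Gf$ is a pullback square. *)

(* the category Set is modelled by Rocq's Type, morphisms by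
   Rocq functions. *)

Definition is_pullback {A B C D : Type}
  (f : A -> B) (g : A -> C) (h : B -> D) (k : C -> D) : Prop :=
  (forall a, h (f a) = k (g a)) /\
  (forall (W : Type) (p : W -> B) (q : W -> C),
      (forall w, h (p w) = k (q w)) ->
      exists u : W -> A,
        (forall w, f (u w) = p w) /\ (forall w, g (u w) = q w) /\
        (forall u' : W -> A,
            (forall w, f (u' w) = p w) -> (forall w, g (u' w) = q w) ->
            forall w, u' w = u w)).

Definition cartesian (F G : Type -> Type)
  (Fm : forall X Y : Type, (X -> Y) -> F X -> F Y)
  (Gm : forall X Y : Type, (X -> Y) -> G X -> G Y)
  (alpha : forall X : Type, F X -> G X) : Prop :=
  forall (X Y : Type) (f : X -> Y),
    is_pullback (Fm X Y f) (alpha X) (alpha Y) (Gm X Y f).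

Record monad := Monad {
  T : Type -> Type;
  fmap : forall X Y : Type, (X -> Y) -> T X -> T Y;
  eta : forall X : Type, X -> T X;
  mu : forall X : Type, T (T X) -> T X;
  fmap_id : forall (X : Type) (t : T X), fmap X X (fun x => x) t = t;
  fmap_comp : forall (X Y Z : Type) (f : X -> Y) (g : Y -> Z) (t : T X),
      fmap X Z (fun x => g (f x)) t = fmap Y Z g (fmap X Y f t);
  eta_nat : forall (X Y : Type) (f : X -> Y) (x : X),
      fmap X Y f (eta X x) = eta Y (f x);
  mu_nat : forall (X Y : Type) (f : X -> Y) (t : T (T X)),
      fmap X Y f (mu X t) = mu Y (fmap (T X) (T Y) (fmap X Y f) t);
  mu_eta_l : forall (X : Type) (t : T X), mu X (eta (T X) t) = t;
  mu_eta_r : forall (X : Type) (t : T X), mu X (fmap X (T X) (eta X) t) = t;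
  mu_assoc : forall (X : Type) (t : T (T (T X))),
      mu X (mu (T X) t) = mu X (fmap (T (T X)) (T X) (mu X) t)
}.

Arguments fmap m {X Y} _ _.
Arguments eta m {X} _.
Arguments mu m {X} _.

Definition eta_cartesian (M : monad) : Prop :=
  cartesian (fun X => X) (T M) (fun X Y f => f) (fun X Y f => fmap M f)
    (fun X => @eta M X).

Definition mu_cartesian (M : monad) : Prop :=
  cartesian (fun X => T M (T M X)) (T M)
    (fun X Y f => fmap M (fmap M f)) (fun X Y f => fmap M f)
    (fun X => @mu M X).

Definition unit_square_pullback (M : monad) (X : Type) : Prop :=
  is_pullback (fun x : X => @eta M (T M X) (@eta M X x)) (fun x : X => x)
    (@mu M X) (@eta M X).


(* The square at X is a pullback exactly when every t : TTX with mu t = eta x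
   equals eta (eta x).  Given such a t, pushing it along the unique map
   ! : X -> 1 produces an element of TT1 with the same property, which is
   therefore eta (eta tt) by the hypothesis at 1.  If eta is cartesian, its
   naturality square at T! then shows that t itself lies in the image of eta,
   and mu t = eta x forces t = eta (eta x).  If mu is cartesian, its
   naturality square at ! shows that t and eta (eta x), which agree after
   TT! and after mu, are equal. *)

Section Pullbacks.

Context {A B C D : Type} {f : A -> B} {g : A -> C} {h : B -> D} {k : C -> D}.
Hypothesis pb : is_pullback f g h k.

Lemma pullback_lift (b : B) (c : C) :
  h b = k c -> exists a, f a = b /\ g a = c.
Proof.
  intros Hbc.
  destruct (proj2 pb unit (fun _ => b) (fun _ => c) (fun _ => Hbc))
    as [u [Hf [Hg _]]].
  exists (u tt). split; [apply Hf | apply Hg].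
Qed.

Lemma pullback_jointly_injective (a a' : A) :
  f a = f a' -> g a = g a' -> a = a'.
Proof.
  intros Hf Hg.
  destruct (proj2 pb unit (fun _ => f a') (fun _ => g a')
              (fun _ => proj1 pb a')) as [u [_ [_ Huniq]]].
  rewrite (Huniq (fun _ => a) (fun _ => Hf) (fun _ => Hg) tt).
  symmetry. apply (Huniq (fun _ => a')); reflexivity.
Qed.

End Pullbacks.

Section UnitSquare.

Variable M : monad.

Lemma unit_square_pullbackP (X : Type) :
  unit_square_pullback M X <->
  (forall (x : X) (t : T M (T M X)), mu M t = eta M x -> t = eta M (eta M x)).
Proof.
  split.
  - intros pb x t Ht.
    destruct (pullback_lift pb _ _ Ht) as [a [Ha <-]].
    symmetry. exact Ha.
  - intros Hfib. split.
    + intros x. apply mu_eta_l.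
    + intros W p q Hpq. exists q. split; [|split].
      * intros w. symmetry. apply Hfib, Hpq.
      * reflexivity.
      * intros u' _ Hu' w. apply Hu'.
Qed.

Lemma unit_square_pullback_image (X Y : Type) (f : X -> Y) (x : X)
    (t : T M (T M X)) :
  unit_square_pullback M Y -> mu M t = eta M x ->
  fmap M (fmap M f) t = eta M (eta M (f x)).
Proof.
  intros pbY Ht. apply (proj1 (unit_square_pullbackP Y) pbY).
  rewrite <- mu_nat, Ht. apply eta_nat.
Qed.

Lemma eta_cartesian_fiber (X Y : Type) (f : X -> Y) (t : T M X) (y : Y) :
  eta_cartesian M -> fmap M f t = eta M y -> exists x, t = eta M x.
Proof.
  intros He Ht.
  destruct (pullback_lift (He X Y f) y t (eq_sym Ht)) as [x [_ Hx]].
  exists x. symmetry. exact Hx.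
Qed.

Lemma mu_cartesian_injective (X Y : Type) (f : X -> Y) (t t' : T M (T M X)) :
  mu_cartesian M ->
  fmap M (fmap M f) t = fmap M (fmap M f) t' -> mu M t = mu M t' -> t = t'.
Proof.
  intros Hm. exact (pullback_jointly_injective (Hm X Y f) t t').
Qed.

End UnitSquare.

Theorem proposition2p13 (M : monad) :
  eta_cartesian M \/ mu_cartesian M ->
  ((forall X : Type, unit_square_pullback M X) <-> unit_square_pullback M unit).
Proof.
  intros Hc. split; [intros H; apply H |].
  intros pb1 X. apply unit_square_pullbackP. intros x t Ht.
  pose (bang := fun _ : X => tt).
  assert (Hbang : fmap M (fmap M bang) t = eta M (eta M tt))
    by exact (unit_square_pullback_image M X unit bang x t pb1 Ht).
  destruct Hc as [He | Hm].
  - destruct (eta_cartesian_fiber M _ _ _ t _ He Hbang) as [s ->].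
    rewrite mu_eta_l in Ht. rewrite Ht. reflexivity.
  - apply (mu_cartesian_injective M X unit bang _ _ Hm).
    + rewrite Hbang, !eta_nat. reflexivity.
    + rewrite Ht. symmetry. apply mu_eta_l.
Qed.
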